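(* Let $R_1,R_2$ be discrete valuation domains with maximal ideals $P_1=R_1p_1$ and $P_2=R_2p_2$, let $\overline{R}$ be a field, $\mathcal{V}_i:R_i\to\overline{R}$ surjective ring homomorphisms with $\ker\mathcal{V}_i=P_i$, and $R=\{(r_1,r_2)\in R_1\times R_2:\mathcal{V}_1(r_1)=\mathcal{V}_2(r_2)\}$. Then for all integers $m,n\ge1$ the following separated $R$-modules are indecomposable pseudo-absorbing primary multiplication $R$-modules: (1) $R$; (2) $(R_1/P_1^n\to\overline{R}\leftarrow R_2/P_2^m)$; (3) $(R_1\to\overline{R}\leftarrow R_2/P_2^m)$; (4) $(R_1/P_1^n\to\overline{R}\leftarrow R_2)$.
   Context: For an $R_1$-module $A$ and an $R_2$-module $B$ among $R_1,R_1/P_1^n$ resp. $R_2,R_2/P_2^m$, with $g:A\to\overline{R}$, $h:B\to\overline{R}$ the surjections induced by $\mathcal{V}_1,\mathcal{V}_2$, the notation $(A\to\overline{R}\leftarrow B)$ denotes the $R$-module $\{(a,b)\in A\oplus B:g(a)=h(b)\}$ with $(r_1,r_2)(a,b)=(r_1a,r_2b)$. An $R$-module $S$ is separated if $(P_1\oplus0)S\cap(0\oplus P_2)S=0$, where $P_1\oplus0=\{(a,0):a\in P_1\}$ and $0\oplus P_2=\{(0,b):b\in P_2\}$. A proper ideal $I$ of a commutative ring is 2-absorbing primary if whenever $abc\in I$ then $ab\in I$ or $ac\in\sqrt I$ or $bc\in\sqrt I$. A proper submodule $N$ of an $R$-module $M$ is pseudo-absorbing primary if $(N:_RM)=\{r\in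 R:rM\subseteq N\}$ is a 2-absorbing primary ideal of $R$. $M$ is a pseudo-absorbing primary multiplication module if every pseudo-absorbing primary submodule $N$ of $M$ satisfies $N=IM$ for some ideal $I$ of $R$. *)

From HB Require Import structures.
From mathcomp Require Import all_boot all_order all_algebra.
Set Implicit Arguments. Unset Strict Implicit. Unset Printing Implicit Defensive.
Import GRing.Theory.
Local Open Scope ring_scope.

(* R is a discrete valuation domain: there is a normalized discrete valuation
   v (defined on nonzero elements) whose valuation ring is exactly R, i.e.
   v(xy)=v(x)+v(y), v(x+y) >= min(v x, v y), divisibility in R is governed by
   v, and v takes the value 1 (so R is not a field). *)
Definition is_DVD (R : idomainType) : Prop :=
  exists v : R -> nat,
    [/\ forall x y, x != 0 -> y != 0 -> v (x * y)%R = addn (v x) (v y),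
        forall x y, x != 0 -> y != 0 -> x + y != 0 ->
          (minn (v x) (v y) <= v (x + y)%R)%N,
        forall x y, x != 0 -> y != 0 -> (v x <= v y)%N -> exists z, y = z * x
      & exists x, x != 0 /\ v x = 1%N].

(* "P = R p": the maximal ideal (= set of non-units of the local ring R)
   is the principal ideal generated by p. *)
Definition max_ideal_gen (R : comUnitRingType) (p : R) : Prop :=
  forall x : R, x \isn't a GRing.unit <-> exists y, x = y * p.

Definition principal (R : comNzRingType) (q : R) : R -> Prop :=
  fun x => exists y, x = y * q.

Definition inR (R1 R2 : comNzRingType) (F : fieldType)
  (V1 : R1 -> F) (V2 : R2 -> F) : R1 * R2 -> Prop :=
  fun r => V1 r.1 = V2 r.2.

Definition is_ideal (S : comNzRingType) (Rp : S -> Prop) (I : S -> Prop) : Prop :=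
  [/\ forall r, I r -> Rp r, I 0,
      forall x y, I x -> I y -> I (x - y)
    & forall r x, Rp r -> I x -> I (r * x)].

Definition proper_ideal (S : comNzRingType) (Rp : S -> Prop) (I : S -> Prop) :=
  is_ideal Rp I /\ exists r, Rp r /\ ~ I r.

Definition rad (S : comNzRingType) (Rp : S -> Prop) (I : S -> Prop) : S -> Prop :=
  fun r => Rp r /\ exists k : nat, I (r ^+ k).

Definition two_abs_primary (S : comNzRingType) (Rp : S -> Prop) (I : S -> Prop) :=
  proper_ideal Rp I /\
  forall a b c, Rp a -> Rp b -> Rp c -> I (a * b * c) ->
    I (a * b) \/ rad Rp I (a * c) \/ rad Rp I (b * c).

(* act : S -> T -> T is the scalar action, M : T -> Prop the module.        *)
Section Modules.
Variables (S : comNzRingType) (T : zmodType) (Rp : S -> Prop)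
  (act : S -> T -> T) (M : T -> Prop).

Definition is_submod (N : T -> Prop) : Prop :=
  [/\ forall x, N x -> M x, N 0,
      forall x y, N x -> N y -> N (x - y)
    & forall r x, Rp r -> N x -> N (act r x)].

Definition colon (N : T -> Prop) : S -> Prop :=
  fun r => Rp r /\ forall x, M x -> N (act r x).

Definition pseudo_abs_primary (N : T -> Prop) : Prop :=
  [/\ is_submod N, exists x, M x /\ ~ N x & two_abs_primary Rp (colon N)].

Inductive IM (I : S -> Prop) : T -> Prop :=
  | IM_gen r x : I r -> M x -> IM I (act r x)
  | IM_0 : IM I 0
  | IM_add x y : IM I x -> IM I y -> IM I (x + y).

Definition PAPM : Prop :=
  forall N, pseudo_abs_primary N ->
    exists I, is_ideal Rp I /\ forall x, N x <-> IM I x.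

Definition indecomposable : Prop :=
  (exists x, M x /\ x <> 0) /\
  forall N1 N2, is_submod N1 -> is_submod N2 ->
    (forall x, N1 x -> N2 x -> x = 0) ->
    (forall x, M x -> exists y z, [/\ N1 y, N2 z & x = y + z]) ->
    (forall x, N1 x -> x = 0) \/ (forall x, N2 x -> x = 0).
End Modules.

(* A is an R1-algebra via pi1 : R1 -> A, B an R2-algebra via pi2. *)
Definition pb_act (R1 R2 A B : comNzRingType)
  (pi1 : R1 -> A) (pi2 : R2 -> B) (r : R1 * R2) (x : A * B) : A * B :=
  (pi1 r.1 * x.1, pi2 r.2 * x.2).

Definition pb_mod (A B : comNzRingType) (F : fieldType)
  (g : A -> F) (h : B -> F) : A * B -> Prop :=
  fun x => g x.1 = h x.2.

Definition separated (R1 R2 : comNzRingType) (T : zmodType)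
  (act : R1 * R2 -> T -> T) (M : T -> Prop) (p1 : R1) (p2 : R2) : Prop :=
  forall x,
    IM act M (fun r : R1 * R2 => principal p1 r.1 /\ r.2 = 0) x ->
    IM act M (fun r : R1 * R2 => r.1 = 0 /\ principal p2 r.2) x -> x = 0.

Definition good_module (R1 R2 : comNzRingType) (F : fieldType)
  (V1 : R1 -> F) (V2 : R2 -> F) (p1 : R1) (p2 : R2)
  (A B : comNzRingType) (pi1 : R1 -> A) (pi2 : R2 -> B)
  (g : A -> F) (h : B -> F) : Prop :=
  let Rp := inR V1 V2 in
  let act := pb_act pi1 pi2 in
  let M := pb_mod g h in
  [/\ separated act M p1 p2, indecomposable Rp act M & PAPM Rp act M].

(* Each of the four modules is (A -> Rbar <- B) for surjective ring maps
   R1 -> A, R2 -> B compatible with V1, V2, so it is the cyclic R-module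
   generated by (1, 1).  A cyclic module is a multiplication module: every
   submodule N equals (N :_R M) M, which gives the pseudo-absorbing primary
   multiplication property.  The ring R is local, since (r1, r2) is a unit of R
   as soon as V1 r1 <> 0; hence if (1, 1) = r (1, 1) + s (1, 1) with the two
   summands in complementary submodules, one of r, s is a unit and its summand
   is the whole module.  Separatedness only uses that R acts componentwise.
   Neither the valuations nor the exponents n, m play any role. *)

From HB Require Import structures.
From mathcomp Require Import all_boot all_order all_algebra.
Set Implicit Arguments.
Unset Strict Implicit.
Unset Printing Implicit Defensive.
Import GRing.Theory.
Local Open Scope ring_scope.

Definition unit_in (S : comNzRingType) (Rp : S -> Prop) (r : S) : Prop :=
  exists2 u, Rp u & u * r = 1.

Lemma residue_neq0_unit (R : comUnitRingType) (F : fieldType) (V : R -> F) (p : R) :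
  max_ideal_gen p -> (forall x, V x = 0 <-> principal p x) ->
  forall x, V x != 0 -> x \is a GRing.unit.
Proof. by move=> mx V0 x; apply: contraNT => /mx /V0 ->. Qed.

Section CyclicModule.
Variables (S : comNzRingType) (T : zmodType) (Rp : S -> Prop)
  (act : S -> T -> T) (M : T -> Prop) (e : T).
Hypotheses (Rp0 : Rp 0) (RpB : forall r s, Rp r -> Rp s -> Rp (r - s))
  (RpM : forall r s, Rp r -> Rp s -> Rp (r * s)).
Hypotheses (act1 : forall x, act 1 x = x)
  (actM : forall r s x, act (r * s) x = act r (act s x))
  (actBl : forall r s x, act (r - s) x = act r x - act s x).
Hypotheses (Me : M e) (M_cyclic : forall x, M x -> exists2 r, Rp r & x = act r e).

Lemma act0l x : act 0 x = 0.
Proof. by have := actBl 0 0 x; rewrite !subrr. Qed.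

Lemma colon_is_ideal N : is_submod Rp act M N -> is_ideal Rp (colon Rp act M N).
Proof.
move=> [_ N0 NB Nact]; split.
- by move=> r [].
- by split=> // x _; rewrite act0l.
- move=> r s [Rr Nr] [Rs Ns]; split; first exact: RpB.
  by move=> x Mx; rewrite actBl; apply: NB; [apply: Nr | apply: Ns].
- move=> r s Rr [Rs Ns]; split; first exact: RpM.
  by move=> x Mx; rewrite actM; apply: Nact => //; apply: Ns.
Qed.

Lemma submod_eq_IM_colon N :
  is_submod Rp act M N -> forall x, N x <-> IM act M (colon Rp act M N) x.
Proof.
move=> [NM N0 NB Nact] x; split.
  move=> Nx; have [r Rr xE] := M_cyclic (NM _ Nx).
  rewrite xE; apply: IM_gen Me; split=> // y My.
  have [s Rs ->] := M_cyclic My.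
  by rewrite -actM mulrC actM -xE; apply: Nact.
have ND y z : N y -> N z -> N (y + z).
  by move=> Ny Nz; have := NB _ _ Ny (NB _ _ N0 Nz); rewrite sub0r opprK.
by elim=> [r y [_ Nr] My | | y z _ Ny _ Nz]; [apply: Nr | | apply: ND].
Qed.

Lemma cyclic_PAPM : PAPM Rp act M.
Proof.
move=> N [NS _ _]; exists (colon Rp act M N).
by split; [apply: colon_is_ideal | apply: submod_eq_IM_colon].
Qed.

Lemma submod_full_of_unit N r :
  is_submod Rp act M N -> N (act r e) -> unit_in Rp r -> forall x, M x -> N x.
Proof.
move=> [_ _ _ Nact] Nr [u Ru ur] x Mx.
have Ne : N e by rewrite -[e]act1 -ur actM; apply: Nact.
by have [s Rs ->] := M_cyclic Mx; apply: Nact.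
Qed.

Lemma cyclic_indecomposable :
  e <> 0 ->
  (forall r s, Rp r -> Rp s -> act r e + act s e = e -> unit_in Rp r \/ unit_in Rp s) ->
  indecomposable Rp act M.
Proof.
move=> e_neq0 act_local; split; first by exists e.
move=> N1 N2 N1S N2S N12_0 N12_cover.
have [[N1M _ _ _] [N2M _ _ _]] := (N1S, N2S).
have [y [z [N1y N2z eE]]] := N12_cover e Me.
have [r Rr yE] := M_cyclic (N1M _ N1y); have [s Rs zE] := M_cyclic (N2M _ N2z).
rewrite yE zE in N1y N2z eE.
case: (act_local r s Rr Rs (esym eE)) => [ur | us].
- by right=> x N2x; apply: N12_0 => //; apply: submod_full_of_unit ur _ (N2M _ N2x).
- by left=> x N1x; apply: N12_0 => //; apply: submod_full_of_unit us _ (N1M _ N1x).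
Qed.

End CyclicModule.

Section Pullback.
Variables (R1 R2 : comUnitRingType) (F : fieldType)
  (V1 : {rmorphism R1 -> F}) (V2 : {rmorphism R2 -> F})
  (A B : comNzRingType) (pi1 : {rmorphism R1 -> A}) (pi2 : {rmorphism R2 -> B})
  (g : A -> F) (h : B -> F).

Local Notation Rp := (inR V1 V2).
Local Notation act := (pb_act pi1 pi2).
Local Notation M := (pb_mod g h).

Lemma inR0 : Rp 0.
Proof. by rewrite /inR /= !rmorph0. Qed.

Lemma inRB r s : Rp r -> Rp s -> Rp (r - s).
Proof. by rewrite /inR /= !rmorphB => -> ->. Qed.

Lemma inRM r s : Rp r -> Rp s -> Rp (r * s).
Proof. by rewrite /inR /= !rmorphM => -> ->. Qed.

Lemma pb_act1 x : act 1 x = x.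
Proof. by case: x => x1 x2; rewrite /pb_act /= !rmorph1 !mul1r. Qed.

Lemma pb_actM r s x : act (r * s) x = act r (act s x).
Proof. by rewrite /pb_act /= !rmorphM !mulrA. Qed.

Lemma pb_actBl r s x : act (r - s) x = act r x - act s x.
Proof. by rewrite /pb_act /= !rmorphB !mulrBl. Qed.

Lemma IM_pb_fst {I : R1 * R2 -> Prop} {x : A * B} :
  IM act M I x -> (forall r, I r -> r.1 = 0) -> x.1 = 0.
Proof.
elim=> [r y Ir _ I1 | // | y z _ y1_0 _ z1_0 I1].
- by rewrite /pb_act /= I1 // rmorph0 mul0r.
- by rewrite /= y1_0 ?z1_0 ?addr0.
Qed.

Lemma IM_pb_snd {I : R1 * R2 -> Prop} {x : A * B} :
  IM act M I x -> (forall r, I r -> r.2 = 0) -> x.2 = 0.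
Proof.
elim=> [r y Ir _ I2 | // | y z _ y2_0 _ z2_0 I2].
- by rewrite /pb_act /= I2 // rmorph0 mul0r.
- by rewrite /= y2_0 ?z2_0 ?addr0.
Qed.

Lemma pb_separated (p1 : R1) (p2 : R2) : separated act M p1 p2.
Proof.
move=> [x1 x2] IM1 IM2.
have x1_0 : x1 = 0 by apply: (IM_pb_fst IM2) => r [].
have x2_0 : x2 = 0 by apply: (IM_pb_snd IM1) => r [].
by rewrite x1_0 x2_0.
Qed.

Hypotheses (V1_unit : forall x, V1 x != 0 -> x \is a GRing.unit)
  (V2_unit : forall x, V2 x != 0 -> x \is a GRing.unit).
Hypotheses (pi1_surj : forall q, exists x, pi1 x = q)
  (pi2_surj : forall q, exists x, pi2 x = q)
  (g_pi1 : forall x, g (pi1 x) = V1 x) (h_pi2 : forall x, h (pi2 x) = V2 x).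

Lemma pb_mod11 : M (1, 1).
Proof. by rewrite /pb_mod /= -(rmorph1 pi1) -(rmorph1 pi2) g_pi1 h_pi2 !rmorph1. Qed.

Lemma pb_mod_cyclic x : M x -> exists2 r, Rp r & x = act r (1, 1).
Proof.
case: x => [x1 x2]; rewrite /pb_mod /=.
have [r1 <-] := pi1_surj x1; have [r2 <-] := pi2_surj x2.
rewrite g_pi1 h_pi2 => V12; exists (r1, r2) => //.
by rewrite /pb_act /= !mulr1.
Qed.

Lemma inR_unit r : Rp r -> V1 r.1 != 0 -> unit_in Rp r.
Proof.
case: r => [r1 r2]; rewrite /inR /= => V12 V1r1_neq0.
have r1_unit := V1_unit V1r1_neq0.
have r2_unit : r2 \is a GRing.unit by apply: V2_unit; rewrite -V12.
exists (r1^-1, r2^-1); first by rewrite /inR /= !rmorphV // V12.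
by change ((r1^-1 * r1, r2^-1 * r2) = (1, 1)); rewrite !mulVr.
Qed.

(* Reducing the first coordinate along [g] gives [V1 r.1 + V1 s.1 = 1]. *)
Lemma pb_local r s : Rp r -> Rp s ->
  act r (1, 1) + act s (1, 1) = (1, 1) -> unit_in Rp r \/ unit_in Rp s.
Proof.
move=> Rr Rs /(congr1 (g \o fst)); rewrite /pb_act /= !mulr1.
rewrite -rmorphD -(rmorph1 pi1) !g_pi1 rmorphD rmorph1 => V1rs.
have [V1r_0 | V1r_neq0] := eqVneq (V1 r.1) 0; last by left; apply: inR_unit.
have V1s1 : V1 s.1 = 1 by rewrite -V1rs V1r_0 add0r.
by right; apply: inR_unit; rewrite // V1s1 oner_eq0.
Qed.

Lemma good_module_pb (p1 : R1) (p2 : R2) :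
  good_module V1 V2 p1 p2 pi1 pi2 g h.
Proof.
split; first exact: pb_separated.
- apply: cyclic_indecomposable pb_act1 pb_actM pb_mod11 pb_mod_cyclic _ pb_local.
  by move/(congr1 fst)/eqP; rewrite oner_eq0.
- exact: cyclic_PAPM inR0 inRB inRM pb_actM pb_actBl pb_mod11 pb_mod_cyclic.
Qed.

End Pullback.

Theorem corollary3p3
  (R1 R2 : idomainType) (Rbar : fieldType) (p1 : R1) (p2 : R2)
  (V1 : {rmorphism R1 -> Rbar}) (V2 : {rmorphism R2 -> Rbar}) :
  is_DVD R1 -> is_DVD R2 ->
  max_ideal_gen p1 -> max_ideal_gen p2 ->
  (forall y : Rbar, exists x, V1 x = y) ->
  (forall y : Rbar, exists x, V2 x = y) ->
  (forall x, V1 x = 0 <-> principal p1 x) ->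
  (forall x, V2 x = 0 <-> principal p2 x) ->
  forall n m : nat, (1 <= n)%N -> (1 <= m)%N ->
  (* (1) R itself: (R1 -> Rbar <- R2) with the regular action *)
  good_module V1 V2 p1 p2 (fun x : R1 => x) (fun x : R2 => x) V1 V2 /\
  (* (2) (R1/P1^n -> Rbar <- R2/P2^m) *)
  (forall (Q1 Q2 : comNzRingType) (pi1 : {rmorphism R1 -> Q1})
          (pi2 : {rmorphism R2 -> Q2}) (g : Q1 -> Rbar) (h : Q2 -> Rbar),
     (forall q, exists x, pi1 x = q) -> (forall q, exists x, pi2 x = q) ->
     (forall x, pi1 x = 0 <-> principal (p1 ^+ n) x) ->
     (forall x, pi2 x = 0 <-> principal (p2 ^+ m) x) ->
     (forall x, g (pi1 x) = V1 x) -> (forall x, h (pi2 x) = V2 x) ->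
     good_module V1 V2 p1 p2 pi1 pi2 g h) /\
  (* (3) (R1 -> Rbar <- R2/P2^m) *)
  (forall (Q2 : comNzRingType) (pi2 : {rmorphism R2 -> Q2}) (h : Q2 -> Rbar),
     (forall q, exists x, pi2 x = q) ->
     (forall x, pi2 x = 0 <-> principal (p2 ^+ m) x) ->
     (forall x, h (pi2 x) = V2 x) ->
     good_module V1 V2 p1 p2 (fun x : R1 => x) pi2 V1 h) /\
  (* (4) (R1/P1^n -> Rbar <- R2) *)
  (forall (Q1 : comNzRingType) (pi1 : {rmorphism R1 -> Q1}) (g : Q1 -> Rbar),
     (forall q, exists x, pi1 x = q) ->
     (forall x, pi1 x = 0 <-> principal (p1 ^+ n) x) ->
     (forall x, g (pi1 x) = V1 x) ->
     good_module V1 V2 p1 p2 pi1 (fun x : R2 => x) g V2).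
Proof.
move=> _ _ mx1 mx2 _ _ V1_0 V2_0 n m _ _.
have V1_unit := residue_neq0_unit mx1 V1_0.
have V2_unit := residue_neq0_unit mx2 V2_0.
have id_surj (T : Type) (q : T) : exists x, idfun x = q by exists q.
split; [|split; [|split]].
- exact: good_module_pb V1_unit V2_unit (@id_surj R1) (@id_surj R2)
    (fun=> erefl) (fun=> erefl) p1 p2.
- move=> Q1 Q2 pi1 pi2 g h pi1_surj pi2_surj _ _ g_pi1 h_pi2.
  exact: good_module_pb V1_unit V2_unit pi1_surj pi2_surj g_pi1 h_pi2 p1 p2.
- move=> Q2 pi2 h pi2_surj _ h_pi2.
  exact: good_module_pb V1_unit V2_unit (@id_surj R1) pi2_surj
    (fun=> erefl) h_pi2 p1 p2.
- move=> Q1 pi1 g pi1_surj _ g_pi1.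
  exact: good_module_pb V1_unit V2_unit pi1_surj (@id_surj R2)
    g_pi1 (fun=> erefl) p1 p2.
Qed.
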